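(* Let $\mathcal X,\mathcal U$ be finite nonempty sets, $f:\mathcal X\times\mathcal U\to\mathcal X$ and $\ell_1,\ell_2:\mathcal X\to\mathbb R$. For $i=1,2$ let $V_{\mathrm{R}i}^*(x)=\max_{\pi\in\Pi}\max_{\tau\in\mathbb N}\ell_i(\xi_x^\pi(\tau))$, $\hat\ell(x)=\max\{\min\{\ell_1(x),V_{\mathrm{R}2}^*(x)\},\min\{V_{\mathrm{R}1}^*(x),\ell_2(x)\}\}$, $\tilde v_{\mathrm R}^*(x)=\max_{\mathbf u\in\mathbb U}\max_{\tau\in\mathbb N}\hat\ell(\xi_x^{\mathbf u}(\tau))$ and $$v_{\mathrm{RR}}^*(x)=\max_{\mathbf u\in\mathbb U}\min\Big\{\max_{\tau\in\mathbb N}\ell_1(\xi_x^{\mathbf u}(\tau)),\max_{\tau\in\mathbb N}\ell_2(\xi_x^{\mathbf u}(\tau))\Big\}.$$ Then $\tilde v_{\mathrm R}^*(x)=v_{\mathrm{RR}}^*(x)$ for every $x\in\mathcal X$.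
   Context: $\mathbb N=\{0,1,\dots\}$; $\Pi$ is the set of maps $\mathcal X\to\mathcal U$; $\mathbb U$ is the set of sequences $\mathbb N\to\mathcal U$. For $\pi\in\Pi$: $\xi_x^\pi(0)=x$, $\xi_x^\pi(t+1)=f(\xi_x^\pi(t),\pi(\xi_x^\pi(t)))$. For $\mathbf u\in\mathbb U$: $\xi_x^{\mathbf u}(0)=x$, $\xi_x^{\mathbf u}(t+1)=f(\xi_x^{\mathbf u}(t),\mathbf u(t))$. *)

From HB Require Import structures.
From mathcomp Require Import all_boot all_order all_algebra.
From mathcomp Require Import classical_sets reals.
Set Implicit Arguments. Unset Strict Implicit. Unset Printing Implicit Defensive.
Import Order.TTheory GRing.Theory Num.Theory.
Local Open Scope classical_set_scope.
Local Open Scope ring_scope.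

Section Defs.
Variables (R : realType) (X U : finType) (f : X -> U -> X).

Fixpoint traj_pol (pi : X -> U) (x : X) (t : nat) : X :=
  match t with
  | 0 => x
  | t'.+1 => let y := traj_pol pi x t' in f y (pi y)
  end.

Fixpoint traj_seq (u : nat -> U) (x : X) (t : nat) : X :=
  match t with
  | 0 => x
  | t'.+1 => f (traj_seq u x t') (u t')
  end.

(* max_{tau in N} g(tau), as a supremum (attained: g has finite range here) *)
Definition max_time (g : nat -> R) : R := sup (range g).

Definition VR (l : X -> R) (x : X) : R :=
  sup (range (fun pi : X -> U => max_time (fun t => l (traj_pol pi x t)))).

Definition lhat (l1 l2 : X -> R) (x : X) : R :=
  Num.max (Num.min (l1 x) (VR l2 x)) (Num.min (VR l1 x) (l2 x)).

Definition vtildeR (l1 l2 : X -> R) (x : X) : R :=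
  sup (range (fun u : nat -> U =>
    max_time (fun t => lhat l1 l2 (traj_seq u x t)))).

Definition vRR (l1 l2 : X -> R) (x : X) : R :=
  sup (range (fun u : nat -> U =>
    Num.min (max_time (fun t => l1 (traj_seq u x t)))
            (max_time (fun t => l2 (traj_seq u x t))))).
End Defs.

(* A state reached from y by an input sequence is also reached by a feedback
   policy (cut the loops out of the trajectory), and conversely every policy
   trajectory is an input trajectory; so V_Ri^*(y) is the best value of l_i
   over the states reachable from y.  Along an input u, the two times
   realising min(max l_1, max l_2) occur in some order, and lhat at the
   earlier one already dominates that minimum: v_RR <= vtilde_R.  Conversely,
   the input that follows u up to time tau and then switches to a policy
   realising V_Ri^* at xi_x^u(tau) shows lhat(xi_x^u(tau)) <= v_RR. *)
From mathcomp Require Import all_boot all_order all_algebra.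
From mathcomp Require Import boolp classical_sets reals.
Set Implicit Arguments. Unset Strict Implicit. Unset Printing Implicit Defensive.
Import Order.TTheory GRing.Theory Num.Theory.
Local Open Scope classical_set_scope.
Local Open Scope ring_scope.

Section SupRange.
Variable R : realType.

Lemma sup_range_le (T : Type) (t0 : T) (h : T -> R) (c : R) :
  (forall t, h t <= c) -> sup (range h) <= c.
Proof. by move=> hc; apply: ge_sup; [exists (h t0), t0 | move=> _ [t _ <-]]. Qed.

Lemma le_sup_range (T : Type) (h : T -> R) (b : R) (t : T) :
  (forall s, h s <= b) -> h t <= sup (range h).
Proof. by move=> hb; apply: ub_le_sup; [exists b => _ [s _ <-] | exists t]. Qed.

Lemma min_sup_range_le (T : Type) (t0 : T) (h : T -> R) (k c : R) :
  (forall t, Num.min (h t) k <= c) -> Num.min (sup (range h)) k <= c.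
Proof.
move=> hc; have [kc|ck] := leP k c; first by rewrite ge_min kc orbT.
suff hc' : forall t, h t <= c by rewrite ge_min (sup_range_le t0 hc').
by move=> t; move: (hc t); rewrite ge_min (leNgt k) ck orbF.
Qed.

Lemma ler_sum_norm (X : finType) (g : X -> R) (y : X) :
  g y <= \sum_(z : X) `|g z|.
Proof.
apply: le_trans (ler_norm _) _; rewrite (bigD1 y) //=.
by rewrite lerDl sumr_ge0.
Qed.

Lemma le_max_time_fin (X : finType) (l : X -> R) (h : nat -> X) (t : nat) :
  l (h t) <= max_time (fun s => l (h s)).
Proof. by apply: le_sup_range => s; apply: ler_sum_norm. Qed.

Lemma max_time_fin_le (X : finType) (l : X -> R) (h : nat -> X) :
  max_time (fun s => l (h s)) <= \sum_(z : X) `|l z|.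
Proof. by apply: (sup_range_le 0%N) => s; apply: ler_sum_norm. Qed.

End SupRange.

Section Trajectories.
Variables (X U : finType) (f : X -> U -> X).

Lemma traj_seqD (u : nat -> U) (x : X) (t m : nat) :
  traj_seq f u x (t + m) = traj_seq f (fun k => u (t + k)%N) (traj_seq f u x t) m.
Proof. by elim: m => [|m IH]; rewrite ?addn0 // addnS /= IH. Qed.

Lemma traj_polD (pi : X -> U) (x : X) (t m : nat) :
  traj_pol f pi x (t + m) = traj_pol f pi (traj_pol f pi x t) m.
Proof. by elim: m => [|m IH]; rewrite ?addn0 // addnS /= IH. Qed.

Lemma traj_polS (pi : X -> U) (x : X) (t : nat) :
  traj_pol f pi x t.+1 = f (traj_pol f pi x t) (pi (traj_pol f pi x t)).
Proof. by []. Qed.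

(* Induction on the horizon, peeling off the first input: if the policy for
   the tail already visits the initial state, drop the loop; otherwise the
   initial state is free and can be assigned the first input. *)
Lemma traj_seq_reachable_by_policy (n : nat) (x : X) (u : nat -> U) :
  exists pi s, traj_pol f pi x s = traj_seq f u x n.
Proof.
elim: n x u => [|n IH] x u; first by exists (fun _ => u 0%N), 0%N.
rewrite -add1n traj_seqD /=; set x1 := f x (u 0%N).
have [pi [s <-]] := IH x1 (fun k => u (1 + k)%N).
have [/existsP[[k /= ks] /eqP xk] | loop_free] :=
  boolP [exists k : 'I_s.+1, traj_pol f pi x1 k == x].
  by exists pi, (s - k)%N; rewrite -xk -traj_polD subnKC.
pose pi' y := if y == x then u 0%N else pi y.
have pi'E k : (k <= s)%N -> traj_pol f pi' x k.+1 = traj_pol f pi x1 k.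
  elim: k => [|k IHk] ks; first by rewrite /= /pi' eqxx.
  rewrite traj_polS IHk ?(ltnW ks) // traj_polS /pi'; case: eqP => // xkx.
  by case/existsP: loop_free; exists (@Ordinal s.+1 k (ltnW ks)); rewrite /= xkx.
by exists pi', s.+1; rewrite pi'E.
Qed.

Definition switch_to_policy (u : nat -> U) (x : X) (tau : nat) (pi : X -> U) :=
  fun k => if (k < tau)%N then u k
           else pi (traj_pol f pi (traj_seq f u x tau) (k - tau)).

Lemma traj_switch_to_policy_before u x tau pi k : (k <= tau)%N ->
  traj_seq f (switch_to_policy u x tau pi) x k = traj_seq f u x k.
Proof.
elim: k => [|k IH] ktau //=.
by rewrite IH ?(ltnW ktau) // /switch_to_policy ktau.
Qed.

Lemma traj_switch_to_policy_after u x tau pi m :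
  traj_seq f (switch_to_policy u x tau pi) x (tau + m) =
  traj_pol f pi (traj_seq f u x tau) m.
Proof.
elim: m => [|m IH]; first by rewrite addn0 traj_switch_to_policy_before.
by rewrite addnS /= IH /switch_to_policy ltnNge leq_addr /= addKn.
Qed.

End Trajectories.

Section Values.
Variables (R : realType) (X U : finType) (f : X -> U -> X).
Implicit Types (l : X -> R) (u : nat -> U) (pi : X -> U).

Lemma le_VR l pi x s : l (traj_pol f pi x s) <= VR f l x.
Proof.
apply: le_trans (le_max_time_fin _ _ s) _.
by rewrite /VR; apply: (@le_sup_range _ _ _ _ pi) => pi'; apply: max_time_fin_le.
Qed.

Lemma le_vtildeR l1 l2 u x t :
  lhat f l1 l2 (traj_seq f u x t) <= vtildeR f l1 l2 x.
Proof.
apply: le_trans (le_max_time_fin _ _ t) _.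
by rewrite /vtildeR; apply: (@le_sup_range _ _ _ _ u) => u'; apply: max_time_fin_le.
Qed.

Lemma le_vRR l1 l2 u x :
  Num.min (max_time (fun t => l1 (traj_seq f u x t)))
          (max_time (fun t => l2 (traj_seq f u x t))) <= vRR f l1 l2 x.
Proof.
rewrite /vRR; apply: (@le_sup_range _ _ _ _ u) => u'.
by rewrite ge_min; apply/orP; left; apply: max_time_fin_le.
Qed.

Lemma vRRC l1 l2 x : vRR f l2 l1 x = vRR f l1 l2 x.
Proof. by rewrite /vRR; under eq_fun do rewrite minC. Qed.

Lemma min_traj_le_VR l l' u x t s : (t <= s)%N ->
  Num.min (l (traj_seq f u x t)) (l' (traj_seq f u x s)) <=
  Num.min (l (traj_seq f u x t)) (VR f l' (traj_seq f u x t)).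
Proof.
move=> ts; apply: le_min2 => //.
rewrite -(subnKC ts) traj_seqD.
have [pi [s' <-]] :=
  traj_seq_reachable_by_policy f (s - t) (traj_seq f u x t) (fun k => u (t + k)%N).
exact: le_VR.
Qed.

Lemma min_VR_le_vRR (u0 : U) l l' u x tau :
  Num.min (l (traj_seq f u x tau)) (VR f l' (traj_seq f u x tau)) <= vRR f l l' x.
Proof.
rewrite minC; apply: (min_sup_range_le (fun _ => u0)) => pi.
apply: (min_sup_range_le 0%N) => s; rewrite minC.
pose u' := switch_to_policy f u x tau pi.
apply: le_trans (le_vRR l l' u' x); apply: le_min2.
  rewrite -(traj_switch_to_policy_before f u x pi (leqnn tau)).
  exact: le_max_time_fin.
rewrite -traj_switch_to_policy_after; exact: le_max_time_fin.
Qed.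

Lemma lhat_le_vRR (u0 : U) l1 l2 u x t :
  lhat f l1 l2 (traj_seq f u x t) <= vRR f l1 l2 x.
Proof.
rewrite /lhat ge_max min_VR_le_vRR //= minC -vRRC.
exact: min_VR_le_vRR.
Qed.

Lemma min_traj_le_vtildeR l1 l2 u x t s :
  Num.min (l1 (traj_seq f u x t)) (l2 (traj_seq f u x s)) <= vtildeR f l1 l2 x.
Proof.
have [ts|st] := leqP t s.
  apply: le_trans (le_vtildeR l1 l2 u x t).
  apply: le_trans (min_traj_le_VR l1 l2 u x ts) _.
  by rewrite /lhat le_max lexx.
apply: le_trans (le_vtildeR l1 l2 u x s); rewrite minC.
apply: le_trans (min_traj_le_VR l2 l1 u x (ltnW st)) _.
by rewrite /lhat le_max (minC (VR f l1 _)) lexx orbT.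
Qed.

End Values.

Theorem mainTheorem15 (R : realType) (X U : finType)
  (hX : (0 < #|X|)%N) (hU : (0 < #|U|)%N)
  (f : X -> U -> X) (l1 l2 : X -> R) :
  forall x : X, vtildeR f l1 l2 x = vRR f l1 l2 x.
Proof.
move=> x; have /card_gt0P [u0 _] := hU.
apply: le_anti; apply/andP; split.
- apply: (sup_range_le (fun _ => u0)) => u; apply: (sup_range_le 0%N) => t.
  exact: lhat_le_vRR.
- apply: (sup_range_le (fun _ => u0)) => u.
  apply: (min_sup_range_le 0%N) => t; rewrite minC.
  apply: (min_sup_range_le 0%N) => s; rewrite minC.
  exact: min_traj_le_vtildeR.
Qed.
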